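(* Let $F_1,F_2\colon\mathbf{A}\to\mathbf{B}$ be lenses, and let $E\colon\mathbf{B}\to\mathbf{C}$ be a lens with $E\circ F_1=E\circ F_2$ such that the get functor $UE$ is a coequaliser of $UF_1$ and $UF_2$ in $\mathbf{Cat}$. Then $E$ is a coequaliser of $F_1$ and $F_2$ in $\mathbf{Lens}$ if and only if for all lenses $G\colon\mathbf{B}\to\mathbf{D}$ with $G\circ F_1=G\circ F_2$, all objects $B$ of $\mathbf{B}$ and all morphisms $d$ of $\mathbf{D}$ with domain $GB$, we have $\varphi_{G,B}(d)=\varphi_{E,B}\big(E\,\varphi_{G,B}(d)\big)$.
   Context: A lens $F\colon \mathbf{A}\to\mathbf{B}$ between small categories consists of a functor $F\colon\mathbf{A}\to\mathbf{B}$ (the get functor) together with, for each object $A$ of $\mathbf{A}$, a function $\varphi_{F,A}$ from the set of morphisms of $\mathbf{B}$ with domain $FA$ to the set of morphisms of $\mathbf{A}$ with domain $A$, such that: $F(\varphi_{F,A}b)=b$; $\varphi_{F,A}(\mathrm{id}_{FA})=\mathrm{id}_A$; and $\varphi_{F,A}(b'\circ b)=\varphi_{F,A'}(b')\circ\varphi_{F,A}(b)$ whenever $b$ has domain $FA$, $A'$ is the codomain of $\varphi_{F,A}b$, and $b'$ has domain $FA'$. $\mathbf{Lens}$ is the category of small categories and lenses, with composite of $F\colon\mathbf{A}\to\mathbf{B}$, $G\colon\mathbf{B}\to\mathbf{C}$ having get functor $G\circ F$ and puts $\varphi_{G\circ F,A}(c)=\varphi_{F,A}(\varphi_{G,FA}(c))$.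 $U\colon\mathbf{Lens}\to\mathbf{Cat}$ sends a lens to its get functor. *)

(* Small categories are presented
   in the "arrow-only" style: a type of objects, a type of morphisms, domain,
   codomain, identities and a (total) composition operation that is only
   constrained on composable pairs. *)

Record Category := {
  Ob : Type;
  Mor : Type;
  dom : Mor -> Ob;
  cod : Mor -> Ob;
  idm : Ob -> Mor;
  comp : Mor -> Mor -> Mor;  (* comp g f = g o f, meaningful when cod f = dom g *)
  dom_idm : forall x, dom (idm x) = x;
  cod_idm : forall x, cod (idm x) = x;
  dom_comp : forall f g, cod f = dom g -> dom (comp g f) = dom f;
  cod_comp : forall f g, cod f = dom g -> cod (comp g f) = cod g;
  comp_id_l : forall f, comp (idm (cod f)) f = f;
  comp_id_r : forall f, comp f (idm (dom f)) = f;
  comp_assoc : forall f g h, cod f = dom g -> cod g = dom h ->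
    comp h (comp g f) = comp (comp h g) f
}.

Arguments dom {c} _.
Arguments cod {c} _.
Arguments idm {c} _.
Arguments comp {c} _ _.

Record Functor (A B : Category) := {
  fo : Ob A -> Ob B;
  fm : Mor A -> Mor B;
  fm_dom : forall f, dom (fm f) = fo (dom f);
  fm_cod : forall f, cod (fm f) = fo (cod f);
  fm_id : forall x, fm (idm x) = idm (fo x);
  fm_comp : forall f g, cod f = dom g -> fm (comp g f) = comp (fm g) (fm f)
}.

Arguments fo {A B} _ _.
Arguments fm {A B} _ _.

Definition functor_eq {A B : Category} (F G : Functor A B) : Prop :=
  (forall x, fo F x = fo G x) /\ (forall f, fm F f = fm G f).

Definition functor_comp {A B C : Category} (F : Functor A B) (G : Functor B C)
  : Functor A C.
Proof.
  refine {| fo := fun x => fo G (fo F x); fm := fun f => fm G (fm F f) |}.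
  - intro f. rewrite fm_dom, fm_dom. reflexivity.
  - intro f. rewrite fm_cod, fm_cod. reflexivity.
  - intro x. rewrite fm_id, fm_id. reflexivity.
  - intros f g H. rewrite fm_comp by exact H. apply fm_comp.
    rewrite fm_cod, fm_dom, H. reflexivity.
Defined.

(* A lens F : A -> B: a get functor together with put functions
   phi_{F,a} : {morphisms of B with domain F a} -> {morphisms of A with domain a}.
   lput a b is only constrained when dom b = F a. *)
Record Lens (A B : Category) := {
  lget : Functor A B;
  lput : Ob A -> Mor B -> Mor A;
  lput_dom : forall a b, dom b = fo lget a -> dom (lput a b) = a;
  lput_lift : forall a b, dom b = fo lget a -> fm lget (lput a b) = b;
  lput_id : forall a, lput a (idm (fo lget a)) = idm a;
  lput_comp : forall a b b', dom b = fo lget a ->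
    dom b' = fo lget (cod (lput a b)) ->
    lput a (comp b' b) = comp (lput (cod (lput a b)) b') (lput a b)
}.

Arguments lget {A B} _.
Arguments lput {A B} _ _ _.

Definition lens_eq {A B : Category} (F G : Lens A B) : Prop :=
  functor_eq (lget F) (lget G) /\
  (forall a b, dom b = fo (lget F) a -> lput F a b = lput G a b).

Definition lens_comp {A B C : Category} (F : Lens A B) (G : Lens B C) : Lens A C.
Proof.
  refine {| lget := functor_comp (lget F) (lget G);
            lput := fun a c => lput F a (lput G (fo (lget F) a) c) |}.
  - simpl. intros a c H. apply lput_dom, lput_dom, H.
  - simpl. intros a c H. rewrite lput_lift by (apply lput_dom, H).
    apply lput_lift, H.
  - simpl. intro a. rewrite lput_id. apply lput_id.
  - simpl. intros a c c' Hc Hc'. simpl in Hc, Hc'.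
    set (x := lput G (fo (lget F) a) c).
    assert (Hx : dom x = fo (lget F) a) by (apply lput_dom, Hc).
    assert (HA : fo (lget F) (cod (lput F a x)) = cod x).
    { rewrite <- fm_cod. rewrite lput_lift by exact Hx. reflexivity. }
    fold x in Hc'. rewrite HA in Hc' |- *.
    rewrite (lput_comp _ _ G) by (exact Hc || exact Hc').
    fold x.
    apply lput_comp; [exact Hx|].
    rewrite HA. apply lput_dom, Hc'.
Defined.

Definition is_coequaliser_Cat {A B C : Category} (F1 F2 : Functor A B)
  (E : Functor B C) : Prop :=
  functor_eq (functor_comp F1 E) (functor_comp F2 E) /\
  forall (D : Category) (G : Functor B D),
    functor_eq (functor_comp F1 G) (functor_comp F2 G) ->
    exists H : Functor C D,
      functor_eq (functor_comp E H) G /\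
      forall H' : Functor C D, functor_eq (functor_comp E H') G -> functor_eq H' H.

Definition is_coequaliser_Lens {A B C : Category} (F1 F2 : Lens A B)
  (E : Lens B C) : Prop :=
  lens_eq (lens_comp F1 E) (lens_comp F2 E) /\
  forall (D : Category) (G : Lens B D),
    lens_eq (lens_comp F1 G) (lens_comp F2 G) ->
    exists H : Lens C D,
      lens_eq (lens_comp E H) G /\
      forall H' : Lens C D, lens_eq (lens_comp E H') G -> lens_eq H' H.

From Stdlib Require Import RelationClasses PropExtensionality ClassicalEpsilon.

(** Testing a coequaliser [E] of [F1, F2] in [Cat] against functors into the
    indiscrete category on [Prop] shows that its object map is surjective and
    that it identifies two objects only if every equivalence relation relating
    all pairs [(F1 a, F2 a)] does.  For a lens [G] coequalising [F1, F2],
    "[G b1 = G b2] and [E (phi_{G,b1} d) = E (phi_{G,b2} d)] for all [d]" is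
    such a relation, so [c, d |-> E (phi_{G,b} d)] does not depend on the
    choice of [b] over [c]; these are the puts of a lens [H] whose get is the
    factorisation of [G] in [Cat].  Its puts are forced, because [E] is
    surjective on objects and [E (phi_{E,b} e) = e], and [H o E = G] on puts
    is exactly the stated condition. *)

(* The indiscrete category on [Prop]: functors into it are just predicates on
   objects. *)
Definition PropCat : Category.
Proof.
  refine {| Ob := Prop; Mor := (Prop * Prop)%type; dom := fst; cod := snd;
            idm := fun x => (x, x); comp := fun g f => (fst f, snd g) |};
  intros; repeat match goal with p : (_ * _)%type |- _ => destruct p end;
  simpl in *; subst; reflexivity.
Defined.

Definition pred_functor (X : Category) (p : Ob X -> Prop) : Functor X PropCat.
Proof.
  refine (Build_Functor X PropCat p (fun f => (p (dom f), p (cod f))) _ _ _ _).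
  - reflexivity.
  - reflexivity.
  - intro x. simpl. rewrite dom_idm, cod_idm. reflexivity.
  - intros f g Hfg. simpl. rewrite dom_comp, cod_comp by exact Hfg. reflexivity.
Defined.

Lemma pred_functor_coequalises {A B : Category} (F1 F2 : Functor A B)
  (p : Ob B -> Prop) :
  (forall a, p (fo F1 a) = p (fo F2 a)) ->
  functor_eq (functor_comp F1 (pred_functor B p))
             (functor_comp F2 (pred_functor B p)).
Proof.
  intro Hp. split; intros; simpl.
  - apply Hp.
  - rewrite !fm_dom, !fm_cod, !Hp. reflexivity.
Qed.

Lemma comp_pred_functor {B C : Category} (E : Functor B C) (p : Ob C -> Prop) :
  functor_eq (functor_comp E (pred_functor C p))
             (pred_functor B (fun b => p (fo E b))).
Proof.
  split; intros; simpl; [reflexivity|]. rewrite fm_dom, fm_cod. reflexivity.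
Qed.

Section CoequaliserCat.
Variables (A B C : Category) (F1 F2 : Functor A B) (E : Functor B C).
Hypothesis HE : is_coequaliser_Cat F1 F2 E.

Lemma coequaliser_Cat_pred_ext (p q : Ob C -> Prop) :
  (forall b, p (fo E b) = q (fo E b)) -> forall c, p c = q c.
Proof.
  intros Hpq c. destruct HE as [[HEo _] HEu].
  destruct (HEu PropCat (pred_functor B (fun b => p (fo E b)))) as [H [_ Huniq]].
  { apply pred_functor_coequalises. intro a. exact (f_equal p (HEo a)). }
  destruct (Huniq (pred_functor C p) (comp_pred_functor E p)) as [Hp _].
  destruct (Huniq (pred_functor C q)) as [Hq _].
  { split; intros; simpl.
    - symmetry. apply Hpq.
    - rewrite fm_dom, fm_cod, !Hpq. reflexivity. }
  simpl in Hp, Hq. rewrite Hp, Hq. reflexivity.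
Qed.

Lemma coequaliser_Cat_ob_surj (c : Ob C) : exists b, fo E b = c.
Proof.
  assert (Himage : (exists b, fo E b = c) = True).
  { apply (coequaliser_Cat_pred_ext (fun c => exists b, fo E b = c) (fun _ => True)).
    intro b. apply propositional_extensionality. split; eauto. }
  rewrite Himage. exact I.
Qed.

Lemma coequaliser_Cat_kernel (R : Ob B -> Ob B -> Prop) (HR : Equivalence R) :
  (forall a, R (fo F1 a) (fo F2 a)) ->
  forall b1 b2, fo E b1 = fo E b2 -> R b1 b2.
Proof.
  intros Hgen b1 b2 Hb. destruct HE as [_ HEu].
  destruct (HEu PropCat (pred_functor B (fun b => R b b2))) as [H [[Hfo _] _]].
  { apply pred_functor_coequalises. intro a. apply propositional_extensionality.
    split; intro HRa.
    - transitivity (fo F1 a); [symmetry; apply Hgen | exact HRa].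
    - transitivity (fo F2 a); [apply Hgen | exact HRa]. }
  pose proof (Hfo b1) as H1. pose proof (Hfo b2) as H2. simpl in H1, H2.
  rewrite <- H1, Hb, H2. reflexivity.
Qed.

End CoequaliserCat.

Section LensFactorisation.
Variables (B C D : Category) (E : Lens B C) (G : Lens B D) (H : Lens C D).
Hypothesis HEH : lens_eq (lens_comp E H) G.

Lemma factor_dom (b : Ob B) (d : Mor D) :
  dom d = fo (lget G) b -> dom d = fo (lget H) (fo (lget E) b).
Proof. intro Hd. rewrite Hd. symmetry. exact (proj1 (proj1 HEH) b). Qed.

Lemma factor_put (b : Ob B) (d : Mor D) : dom d = fo (lget G) b ->
  lput E b (lput H (fo (lget E) b) d) = lput G b d.
Proof. intro Hd. exact (proj2 HEH b d (factor_dom b d Hd)). Qed.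

Lemma factor_put_get (b : Ob B) (d : Mor D) : dom d = fo (lget G) b ->
  fm (lget E) (lput G b d) = lput H (fo (lget E) b) d.
Proof.
  intro Hd. rewrite <- factor_put by exact Hd.
  apply lput_lift, lput_dom, factor_dom, Hd.
Qed.

Lemma factor_put_eq (b : Ob B) (d : Mor D) : dom d = fo (lget G) b ->
  lput G b d = lput E b (fm (lget E) (lput G b d)).
Proof.
  intro Hd. rewrite factor_put_get by exact Hd. symmetry. apply factor_put, Hd.
Qed.

End LensFactorisation.

Lemma factor_put_unique {B C D : Category} (E : Lens B C) (G : Lens B D)
  (H H' : Lens C D) :
  (forall c, exists b, fo (lget E) b = c) ->
  lens_eq (lens_comp E H) G -> lens_eq (lens_comp E H') G ->
  forall c d, dom d = fo (lget H') c -> lput H' c d = lput H c d.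
Proof.
  intros Hsurj HEH HEH' c d Hd. destruct (Hsurj c) as [b <-].
  assert (HdG : dom d = fo (lget G) b) by (rewrite Hd; exact (proj1 (proj1 HEH') b)).
  rewrite <- (factor_put_get _ _ _ E G H' HEH' b d HdG).
  rewrite <- (factor_put_get _ _ _ E G H HEH b d HdG).
  reflexivity.
Qed.

Section FactorLens.
Variables (A B C D : Category) (F1 F2 : Lens A B) (E : Lens B C) (G : Lens B D).
Hypothesis HE : is_coequaliser_Cat (lget F1) (lget F2) (lget E).
Hypothesis HG : lens_eq (lens_comp F1 G) (lens_comp F2 G).

Definition put_agree (b1 b2 : Ob B) : Prop :=
  fo (lget G) b1 = fo (lget G) b2 /\
  forall d, dom d = fo (lget G) b1 ->
    fm (lget E) (lput G b1 d) = fm (lget E) (lput G b2 d).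

Lemma put_agree_equivalence : Equivalence put_agree.
Proof.
  split.
  - intro b. split; reflexivity.
  - intros b1 b2 [Hob Hput]. split; [now symmetry|].
    intros d Hd. symmetry. apply Hput. congruence.
  - intros b1 b2 b3 [Hob12 Hput12] [Hob23 Hput23]. split; [congruence|].
    intros d Hd. rewrite Hput12 by exact Hd. apply Hput23. congruence.
Qed.

Lemma put_agree_generators (a : Ob A) :
  put_agree (fo (lget F1) a) (fo (lget F2) a).
Proof.
  destruct HG as [[HGo _] HGput]. destruct HE as [[_ HEm] _].
  split; [exact (HGo a)|]. intros d Hd.
  assert (Hd2 : dom d = fo (lget G) (fo (lget F2) a)) by (rewrite Hd; exact (HGo a)).
  specialize (HGput a d Hd). simpl in HGput.
  rewrite <- (lput_lift _ _ F1 a _ (lput_dom _ _ G _ _ Hd)).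
  rewrite <- (lput_lift _ _ F2 a _ (lput_dom _ _ G _ _ Hd2)).
  rewrite HGput. exact (HEm _).
Qed.

Lemma put_agree_of_get_eq (b1 b2 : Ob B) :
  fo (lget E) b1 = fo (lget E) b2 -> put_agree b1 b2.
Proof.
  exact (coequaliser_Cat_kernel _ _ _ _ _ _ HE _ put_agree_equivalence
           put_agree_generators b1 b2).
Qed.

Definition ob_lift (c : Ob C) : Ob B :=
  proj1_sig (constructive_indefinite_description _
               (coequaliser_Cat_ob_surj _ _ _ _ _ _ HE c)).

Lemma get_ob_lift (c : Ob C) : fo (lget E) (ob_lift c) = c.
Proof. unfold ob_lift. apply proj2_sig. Qed.

Variable H0 : Functor C D.
Hypothesis HH0 : functor_eq (functor_comp (lget E) H0) (lget G).

Lemma fo_ob_lift (c : Ob C) : fo H0 c = fo (lget G) (ob_lift c).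
Proof. rewrite <- (get_ob_lift c) at 1. exact (proj1 HH0 (ob_lift c)). Qed.

Definition factor_lens_put (c : Ob C) (d : Mor D) : Mor C :=
  fm (lget E) (lput G (ob_lift c) d).

Lemma factor_lens_put_dom (c : Ob C) (d : Mor D) :
  dom d = fo H0 c -> dom (factor_lens_put c d) = c.
Proof.
  intro Hd. unfold factor_lens_put. rewrite fm_dom, lput_dom.
  - apply get_ob_lift.
  - rewrite Hd. apply fo_ob_lift.
Qed.

Lemma factor_lens_put_lift (c : Ob C) (d : Mor D) :
  dom d = fo H0 c -> fm H0 (factor_lens_put c d) = d.
Proof.
  intro Hd. rewrite fo_ob_lift in Hd.
  exact (eq_trans (proj2 HH0 _) (lput_lift _ _ G _ _ Hd)).
Qed.

Lemma factor_lens_put_id (c : Ob C) :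
  factor_lens_put c (idm (fo H0 c)) = idm c.
Proof.
  unfold factor_lens_put. rewrite fo_ob_lift, lput_id, fm_id, get_ob_lift.
  reflexivity.
Qed.

Lemma factor_lens_put_comp (c : Ob C) (d d' : Mor D) :
  dom d = fo H0 c -> dom d' = fo H0 (cod (factor_lens_put c d)) ->
  factor_lens_put c (comp d' d) =
  comp (factor_lens_put (cod (factor_lens_put c d)) d') (factor_lens_put c d).
Proof.
  intros Hd Hd'. rewrite fo_ob_lift in Hd. unfold factor_lens_put in *.
  set (x := lput G (ob_lift c) d) in *.
  rewrite fm_cod in Hd' |- *.
  assert (Hd'x : dom d' = fo (lget G) (cod x)) by (rewrite Hd'; exact (proj1 HH0 _)).
  rewrite (lput_comp _ _ G) by assumption.
  rewrite fm_comp by (symmetry; apply lput_dom, Hd'x).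
  f_equal.
  destruct (put_agree_of_get_eq (ob_lift (fo (lget E) (cod x))) (cod x)) as [Hob Hput].
  - apply get_ob_lift.
  - symmetry. apply Hput. rewrite Hob. exact Hd'x.
Qed.

Definition factor_lens : Lens C D :=
  {| lget := H0; lput := factor_lens_put;
     lput_dom := factor_lens_put_dom; lput_lift := factor_lens_put_lift;
     lput_id := factor_lens_put_id; lput_comp := factor_lens_put_comp |}.

Lemma factor_lens_factors :
  (forall b d, dom d = fo (lget G) b ->
     lput G b d = lput E b (fm (lget E) (lput G b d))) ->
  lens_eq (lens_comp E factor_lens) G.
Proof.
  intro Hcond. split; [exact HH0|]. intros b d Hd. simpl in Hd |- *.
  assert (HdG : dom d = fo (lget G) b) by (rewrite Hd; exact (proj1 HH0 b)).
  destruct (put_agree_of_get_eq (ob_lift (fo (lget E) b)) b) as [Hob Hput].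
  { apply get_ob_lift. }
  unfold factor_lens_put. rewrite Hput by (rewrite Hob; exact HdG).
  symmetry. apply Hcond, HdG.
Qed.

End FactorLens.

Theorem theorem4p5 (A B C : Category) (F1 F2 : Lens A B) (E : Lens B C) :
  lens_eq (lens_comp F1 E) (lens_comp F2 E) ->
  is_coequaliser_Cat (lget F1) (lget F2) (lget E) ->
  (is_coequaliser_Lens F1 F2 E <->
   forall (D : Category) (G : Lens B D),
     lens_eq (lens_comp F1 G) (lens_comp F2 G) ->
     forall (b : Ob B) (d : Mor D),
       dom d = fo (lget G) b ->
       lput G b d = lput E b (fm (lget E) (lput G b d))).
Proof.
  intros HEE HE. split.
  - intros [_ HEu] D G HG.
    destruct (HEu D G HG) as [H [HEH _]].
    exact (factor_put_eq _ _ _ E G H HEH).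
  - intros Hcond. split; [exact HEE|]. intros D G HG.
    destruct (proj2 HE D (lget G) (proj1 HG)) as [H0 [HH0 Huniq]].
    pose proof (factor_lens_factors A B C D F1 F2 E G HE HG H0 HH0 (Hcond D G HG))
      as Hfactor.
    exists (factor_lens A B C D F1 F2 E G HE HG H0 HH0).
    split; [exact Hfactor|].
    intros H' HEH'. split; [exact (Huniq _ (proj1 HEH'))|].
    exact (factor_put_unique E G _ H' (coequaliser_Cat_ob_surj _ _ _ _ _ _ HE)
             Hfactor HEH').
Qed.
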